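(* Let $\Omega$ be a finite set and $f:2^{\Omega}\to\mathbb{R}$ increasing with $f(\emptyset)=0$. Let $H_f=\mathrm{conv}\{(x(\mathcal{S}),z)\in\mathbb{R}^{|\Omega|}\times\mathbb{R}:\mathcal{S}\subseteq\Omega,\ f(\mathcal{S})\le z\}$. Suppose $\gamma\in\mathbb{R}^{|\Omega|}$, $\gamma_0\in\mathbb{R}$, and the inequality $\sum_{s\in\Omega}\gamma_sx_s\le z+|\Omega|D[f]+\gamma_0$ defines a nontrivial facet of $H_f$. Let $\bar f:2^{\Omega}\to\mathbb{R}$ be defined by $\bar f(\emptyset)=0$ and $\bar f(\mathcal{S})=f(\mathcal{S})+|\Omega|D[f]+\gamma_0$ for all nonempty $\mathcal{S}\subseteq\Omega$, and suppose $\gamma\in\Gamma(\bar f)$. Then $\gamma_0\le0$.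
   Context: $x(\mathcal{S})$ is the characteristic vector of $\mathcal{S}$. A facet is nontrivial if it is not defined by a variable bound inequality. For a set function $h$ and permutation $\pi$ of $\Omega$, $\mathcal{S}^\pi_0=\emptyset$, $\mathcal{S}^\pi_k=\{\pi_1,\dots,\pi_k\}$; $\Gamma(h)=\{\gamma\in\mathbb{R}^{|\Omega|}:\exists$ permutation $\pi$ with $\gamma_{\pi_i}=h(\mathcal{S}^\pi_i)-h(\mathcal{S}^\pi_{i-1})$ for all $i\}$. $D[f]=\max\{f(\mathcal{A}\cup\mathcal{B}\cup\{s\})-f(\mathcal{A}\cup\mathcal{B})-f(\mathcal{A}\cup\{s\})+f(\mathcal{A}):\mathcal{A},\mathcal{B}\subseteq\Omega,s\in\Omega,|\mathcal{A}|\le|\Omega|-1\}$. *)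

From mathcomp Require Import all_boot all_order all_algebra.
Set Implicit Arguments. Unset Strict Implicit. Unset Printing Implicit Defensive.
Import Order.TTheory GRing.Theory Num.Theory.
Local Open Scope ring_scope.

Section Defs.
Variables (R : realFieldType) (Omega : finType).

Definition pt := ((Omega -> R) * R)%type.

Definition charvec (S : {set Omega}) : Omega -> R :=
  fun s => if s \in S then 1 else 0.

Definition conv (G : pt -> Prop) (p : pt) : Prop :=
  exists (n : nat) (w : 'I_n -> R) (q : 'I_n -> pt),
    [/\ forall i, 0 <= w i,
        \sum_(i < n) w i = 1,
        forall i, G (q i),
        forall s, p.1 s = \sum_(i < n) w i * (q i).1 s
      & p.2 = \sum_(i < n) w i * (q i).2].

Definition Hf (f : {set Omega} -> R) : pt -> Prop :=
  conv (fun p => exists S : {set Omega}, p.1 = charvec S /\ f S <= p.2).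

Definition aff_indep (k : nat) (q : 'I_k -> pt) : Prop :=
  forall lam : 'I_k -> R,
    \sum_(i < k) lam i = 0 ->
    (forall s, \sum_(i < k) lam i * (q i).1 s = 0) ->
    \sum_(i < k) lam i * (q i).2 = 0 ->
    forall i, lam i = 0.

Definition aff_dim (P : pt -> Prop) (d : nat) : Prop :=
  (exists q : 'I_d.+1 -> pt, (forall i, P (q i)) /\ aff_indep q) /\
  ~ (exists q : 'I_d.+2 -> pt, (forall i, P (q i)) /\ aff_indep q).

Definition lform (a : Omega -> R) (b : R) (p : pt) : R :=
  \sum_(s : Omega) a s * p.1 s + b * p.2.

Definition face (P : pt -> Prop) (a : Omega -> R) (b c : R) (p : pt) : Prop :=
  P p /\ lform a b p = c.

Definition defines_facet (P : pt -> Prop) (a : Omega -> R) (b c : R) : Prop :=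
  (forall p, P p -> lform a b p <= c) /\
  exists d : nat, aff_dim P d.+1 /\ aff_dim (face P a b c) d.

Definition unitvec (t : Omega) : Omega -> R := fun s => if s == t then 1 else 0.

(* the facet defined by a.x + bz <= c is nontrivial: it is not the face
   defined by a variable bound inequality x_t >= 0 or x_t <= 1 *)
Definition nontrivial_facet (P : pt -> Prop) (a : Omega -> R) (b c : R) : Prop :=
  forall t : Omega,
    (face P a b c <> face P (fun s => - unitvec t s) 0 0) /\
    (face P a b c <> face P (unitvec t) 0 1).

Definition Dmax (f : {set Omega} -> R) : R :=
  \big[Num.max/0]_(A : {set Omega}) \big[Num.max/0]_(B : {set Omega})
   \big[Num.max/0]_(s : Omega | (#|A| <= #|Omega| - 1)%N)
     (f (A :|: B :|: [set s]) - f (A :|: B) - f (A :|: [set s]) + f A).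

(* Gamma(h): gamma_{pi_i} = h(S_i) - h(S_{i-1}) for a permutation pi,
   written 0-indexed with pi : 'I_#|Omega| -> Omega bijective and
   S^pi_k = {pi_0, ..., pi_{k-1}} *)
Definition Spi (pi : 'I_#|Omega| -> Omega) (k : nat) : {set Omega} :=
  [set pi j | j : 'I_#|Omega| & (j < k)%N].

Definition inGamma (h : {set Omega} -> R) (gamma : Omega -> R) : Prop :=
  exists pi : 'I_#|Omega| -> Omega, bijective pi /\
    forall i : 'I_#|Omega|, gamma (pi i) = h (Spi pi i.+1) - h (Spi pi i).

Definition increasing (f : {set Omega} -> R) : Prop :=
  forall S T : {set Omega}, S \subset T -> f S <= f T.

End Defs.

(* Suppose gamma0 > 0 and let t = pi_0 be the first element of the ordering
   pi witnessing gamma in Gamma(f_bar).  Along pi, gamma is the sequence of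
   marginals of f (except at t), and the marginal of f at s over a set exceeds
   its marginal over a subset by at most D[f].  Telescoping over a set S that
   avoids t gives gamma(S) - f(S) <= |S| D[f] < |Omega| D[f] + gamma0, so t
   lies in every S with (x(S), f(S)) on the facet.  The facet then lies in the
   hyperplane x_t = 1, and adding the points (0, 0) and (0, 1) of H_f to an
   affinely independent family spanning the facet gives dim H_f + 2 affinely
   independent points of H_f, which is impossible. *)

From mathcomp Require Import all_boot all_order all_algebra.
From mathcomp Require Import lra zify.
Import Order.TTheory GRing.Theory Num.Theory.
Local Open Scope ring_scope.
Set Implicit Arguments.
Unset Strict Implicit.

Section Marginals.
Variables (R : realFieldType) (Omega : finType) (f : {set Omega} -> R).

Lemma Dmax_ge0 : 0 <= Dmax f.
Proof. exact: bigmax_ge_id. Qed.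

Lemma marginal_le_Dmax (A B : {set Omega}) (s : Omega) :
  A \subset B -> (#|A| <= #|Omega| - 1)%N ->
  f (s |: B) - f B <= f (s |: A) - f A + Dmax f.
Proof.
move=> /setUidPr AB cardA.
have D_ge : f (A :|: B :|: [set s]) - f (A :|: B) - f (A :|: [set s]) + f A
            <= Dmax f.
  rewrite /Dmax; apply: le_trans (le_bigmax _ _ A).
  apply: le_trans (le_bigmax _ _ B).
  exact: (le_bigmax_cond _ (j := s)).
by rewrite AB ![_ :|: [set s]]setUC in D_ge; lra.
Qed.

End Marginals.

Section Orderings.
Variables (Omega : finType) (pi : 'I_#|Omega| -> Omega).

Lemma mem_Spi (j : 'I_#|Omega|) k : (j < k)%N -> pi j \in Spi pi k.
Proof. by move=> jk; apply/imsetP; exists j; rewrite ?inE. Qed.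

Lemma Spi_neq0 (j : 'I_#|Omega|) k : (j < k)%N -> Spi pi k != set0.
Proof. by move=> /mem_Spi jk; apply/set0Pn; exists (pi j). Qed.

Lemma Spi0 : Spi pi 0 = set0.
Proof. by apply/setP => x; rewrite inE; apply/imsetP => -[j]; rewrite inE. Qed.

Lemma SpiS (i : 'I_#|Omega|) : Spi pi i.+1 = pi i |: Spi pi i.
Proof.
apply/setP => x; rewrite !inE; apply/imsetP/orP => [[j]|[/eqP ->|/imsetP[j]]].
- rewrite inE ltnS leq_eqVlt => /orP[/eqP/val_inj -> ->|ji ->]; first by left.
  by right; apply: mem_Spi.
- by exists i; rewrite ?inE.
- by rewrite inE => ji ->; exists j; rewrite // inE ltnS ltnW.
Qed.

Hypothesis pi_bij : bijective pi.

Lemma Spi_notin (i : 'I_#|Omega|) : pi i \notin Spi pi i.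
Proof.
apply/imsetP => -[j]; rewrite inE => ji /(bij_inj pi_bij) ij.
by rewrite ij ltnn in ji.
Qed.

Lemma Spi_cardT : Spi pi #|Omega| = setT.
Proof.
have [g _ gK] := pi_bij.
by apply/setP => x; rewrite inE -(gK x) mem_Spi.
Qed.

End Orderings.

Section DefectBound.
Variables (R : realFieldType) (Omega : finType).
Variables (f : {set Omega} -> R) (gamma : Omega -> R).
Variable pi : 'I_#|Omega| -> Omega.
Hypothesis pi_bij : bijective pi.
Hypothesis f0 : f set0 = 0.
Hypothesis gamma_marginal : forall i : 'I_#|Omega|,
  (0 < i)%N -> gamma (pi i) = f (Spi pi i.+1) - f (Spi pi i).

Lemma setI_U1 (S B : {set Omega}) (x : Omega) :
  S :&: (x |: B) = if x \in S then x |: (S :&: B) else S :&: B.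
Proof.
by apply/setP => y; case: ifP => xS; rewrite !inE; case: eqP => // ->; rewrite xS.
Qed.

Lemma sum_sub_le_Dmax (S : {set Omega}) :
  (forall i : 'I_#|Omega|, pi i \in S -> (0 < i)%N) ->
  \sum_(s in S) gamma s - f S <= #|S|%:R * Dmax f.
Proof.
move=> S_pos.
suff bound_k k : (k <= #|Omega|)%N ->
    \sum_(s in S :&: Spi pi k) gamma s - f (S :&: Spi pi k)
    <= #|S :&: Spi pi k|%:R * Dmax f.
  by have := bound_k _ (leqnn _); rewrite Spi_cardT // setIT.
elim: k => [|k IHk] lt_k.
  by rewrite Spi0 setI0 big_set0 cards0 f0 subrr mul0r.
have {IHk} := IHk (ltnW lt_k); set i := Ordinal lt_k.
have -> : Spi pi k.+1 = pi i |: Spi pi k := SpiS pi i.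
rewrite setI_U1; case: ifP => // piS; set A := S :&: Spi pi k => IHk.
have piNA : pi i \notin A by rewrite inE negb_and (Spi_notin pi_bij) orbT.
have cardA : (#|A| <= #|Omega| - 1)%N.
  by have := max_card (pi i |: A); rewrite cardsU1 piNA; lia.
have := marginal_le_Dmax f (pi i) (subsetIr S (Spi pi k)) cardA.
rewrite -(SpiS pi i) -gamma_marginal ?S_pos //.
rewrite big_setU1 //= cardsU1 piNA add1n -addn1 natrD mulrDl mul1r; lra.
Qed.

End DefectBound.

Definition tight (R : realFieldType) (Omega : finType)
  (f : {set Omega} -> R) (gamma : Omega -> R) (c : R) (S : {set Omega}) :=
  c <= \sum_(s in S) gamma s - f S.

Section ShiftedGamma.
Variables (R : realFieldType) (Omega : finType).
Variables (f h : {set Omega} -> R) (gamma : Omega -> R) (e : R).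
Variable pi : 'I_#|Omega| -> Omega.
Hypothesis pi_bij : bijective pi.
Hypothesis f0 : f set0 = 0.
Hypothesis h_shift : forall S, S != set0 -> h S = f S + e.
Hypothesis gamma_pi : forall i : 'I_#|Omega|,
  gamma (pi i) = h (Spi pi i.+1) - h (Spi pi i).

Lemma gamma_pi_marginal (i : 'I_#|Omega|) :
  (0 < i)%N -> gamma (pi i) = f (Spi pi i.+1) - f (Spi pi i).
Proof.
move=> i_pos; pose i0 := Ordinal (ltn_trans i_pos (ltn_ord i)).
rewrite gamma_pi !h_shift ?(Spi_neq0 pi (j := i0)) ?(Spi_neq0 pi (j := i)) //.
by rewrite opprD addrACA subrr addr0.
Qed.

Lemma tight_mem_pi0 (i0 : 'I_#|Omega|) S :
  val i0 = 0%N -> #|Omega|%:R * Dmax f < e -> tight f gamma e S -> pi i0 \in S.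
Proof.
move=> i0_0 e_gt; apply: contraTT => pi0_notin; rewrite /tight -ltNge.
have S_pos i : pi i \in S -> (0 < i)%N.
  apply: contraTT; rewrite lt0n negbK => /eqP i_0.
  by have -> : i = i0 by apply: val_inj => /=; rewrite i_0 i0_0.
have := sum_sub_le_Dmax pi_bij f0 gamma_pi_marginal S_pos.
have : #|S|%:R * Dmax f <= #|Omega|%:R * Dmax f :> R.
  by rewrite ler_wpM2r ?Dmax_ge0 ?ler_nat ?max_card.
lra.
Qed.

End ShiftedGamma.

Definition ord_cons (T : Type) (k : nat) (x : T) (q : 'I_k -> T) (i : 'I_k.+1)
  : T :=
  if unlift ord0 i is Some j then q j else x.

Lemma ord_cons0 (T : Type) k (x : T) (q : 'I_k -> T) : ord_cons x q ord0 = x.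
Proof. by rewrite /ord_cons unlift_none. Qed.

Lemma ord_consS (T : Type) k (x : T) (q : 'I_k -> T) j :
  ord_cons x q (lift ord0 j) = q j.
Proof. by rewrite /ord_cons liftK. Qed.

Section AffineHull.
Variables (R : realFieldType) (Omega : finType).
Implicit Types (a : Omega -> R) (b c e : R) (p : pt R Omega).

Lemma lform_comb k (lam : 'I_k -> R) (q : 'I_k -> pt R Omega) a b :
  lform a b (fun s => \sum_i lam i * (q i).1 s, \sum_i lam i * (q i).2)
  = \sum_i lam i * lform a b (q i).
Proof.
rewrite /lform /=; under eq_bigr do rewrite mulr_sumr.
rewrite exchange_big mulr_sumr -big_split /=; apply: eq_bigr => i _.
rewrite mulrDr mulr_sumr mulrCA; congr (_ + _).
by apply: eq_bigr => s _; rewrite mulrCA.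
Qed.

Lemma lform_charvec a b (S : {set Omega}) z :
  lform a b (charvec R S, z) = \sum_(s in S) a s + b * z.
Proof.
rewrite /lform /= [in RHS]big_mkcond; congr (_ + _); apply: eq_bigr => s _.
by rewrite /charvec; case: (s \in S); rewrite ?mulr1 ?mulr0.
Qed.

Lemma lform_unitvec t p : lform (unitvec R t) 0 p = p.1 t.
Proof.
rewrite /lform mul0r addr0 (bigD1 t) //= big1 => [|s /negbTE st].
  by rewrite /unitvec eqxx mul1r addr0.
by rewrite /unitvec st mul0r.
Qed.

Lemma lform_sub_coord a b e t p :
  lform (fun s => a s - e * unitvec R t s) b p = lform a b p - e * p.1 t.
Proof.
rewrite -lform_unitvec /lform mul0r addr0 mulr_sumr -addrAC -sumrB.
by congr (_ + _); apply: eq_bigr => s _; rewrite mulrBl mulrA.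
Qed.

Lemma aff_indep_cons k (q : 'I_k -> pt R Omega) p a b e :
  aff_indep q -> (forall i, lform a b (q i) = e) -> lform a b p != e ->
  aff_indep (ord_cons p q).
Proof.
move=> q_indep q_e p_e lam lam_sum lam_x lam_z.
have cons_sum (G : pt R Omega -> R) : \sum_i lam i * G (ord_cons p q i)
    = lam ord0 * G p + \sum_(j < k) lam (lift ord0 j) * G (q j).
  by rewrite big_ord_recl ord_cons0; under eq_bigr do rewrite ord_consS.
have lam0 : lam ord0 = 0.
  have : \sum_i lam i * lform a b (ord_cons p q i) = 0.
    rewrite -lform_comb /lform /= lam_z mulr0 addr0.
    by rewrite big1 // => s _; rewrite lam_x mulr0.
  rewrite (cons_sum (lform a b)); under eq_bigr do rewrite q_e.
  rewrite -mulr_suml; move: lam_sum; rewrite big_ord_recl.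
  move=> /eqP; rewrite addrC addr_eq0 => /eqP ->.
  rewrite mulNr -mulrBr => /eqP; rewrite mulf_eq0 subr_eq0 (negbTE p_e) orbF.
  by move=> /eqP.
have lamS j : lam (lift ord0 j) = 0.
  apply: (q_indep (fun j => lam (lift ord0 j))) => [|s|].
  - by move: lam_sum; rewrite big_ord_recl lam0 add0r.
  - by rewrite -[RHS](lam_x s) (cons_sum (fun x => x.1 s)) lam0 mul0r add0r.
  - by rewrite -[RHS]lam_z (cons_sum (fun x => x.2)) lam0 mul0r add0r.
by move=> i; case: (unliftP ord0 i) => [j ->|->].
Qed.

Lemma conv_face_support (G : pt R Omega -> Prop) a b c p :
  (forall x, G x -> lform a b x <= c) -> conv G p -> lform a b p = c ->
  exists n (w : 'I_n -> R) (q : 'I_n -> pt R Omega),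
  [/\ \sum_i w i = 1, forall s, p.1 s = \sum_i w i * (q i).1 s
    & forall i, w i != 0 -> G (q i) /\ lform a b (q i) = c].
Proof.
move=> G_le [n [w [q [w_ge0 w_sum Gq p_x p_z]]]] p_c.
exists n, w, q; split=> // i w_i; split; first exact: Gq.
have slack_sum : \sum_i w i * (c - lform a b (q i)) = 0.
  under eq_bigr do rewrite mulrBr.
  rewrite sumrB -mulr_suml w_sum mul1r -lform_comb -{1}p_c /lform p_z.
  apply/eqP; rewrite subr_eq0; apply/eqP; congr (_ + _).
  by apply: eq_bigr => s _; rewrite p_x.
have slack_ge0 j : 0 <= w j * (c - lform a b (q j)).
  by rewrite mulr_ge0 // subr_ge0 G_le.
have /eqP := psumr_eq0P (fun j _ => slack_ge0 j) slack_sum (i := i) isT.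
by rewrite mulf_eq0 (negbTE w_i) subr_eq0 => /eqP.
Qed.

End AffineHull.

Section FaceOfHf.
Variables (R : realFieldType) (Omega : finType).
Variables (f : {set Omega} -> R) (gamma : Omega -> R) (c : R).

Lemma charvec_in_Hf (S : {set Omega}) z : f S <= z -> Hf f (charvec R S, z).
Proof.
move=> fS_le; exists 1%N, (fun=> 1), (fun=> (charvec R S, z)).
by split=> [_||_|s|]; rewrite ?big_ord1 ?mul1r ?ler01 //; exists S.
Qed.

Hypothesis Hf_le : forall p, Hf f p -> lform gamma (-1) p <= c.

Lemma face_Hf_support p : face (Hf f) gamma (-1) c p ->
  exists n (w : 'I_n -> R) (q : 'I_n -> pt R Omega),
  [/\ \sum_i w i = 1, forall s, p.1 s = \sum_i w i * (q i).1 s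
    & forall i, w i != 0 -> exists2 S, (q i).1 = charvec R S & tight f gamma c S].
Proof.
move=> [p_Hf p_c].
have gen_le x :
    (exists S, x.1 = charvec R S /\ f S <= x.2) -> lform gamma (-1) x <= c.
  move=> [S [x_S fS_le]]; apply: Hf_le.
  by rewrite [x]surjective_pairing x_S; apply: charvec_in_Hf.
have [n [w [q [w_sum p_x q_face]]]] := conv_face_support gen_le p_Hf p_c.
exists n, w, q; split=> // i /q_face[[S [q_S fS_le]] q_c]; exists S => //.
move: q_c; rewrite /tight [q i]surjective_pairing q_S lform_charvec mulN1r => <-.
by rewrite lerB.
Qed.

Lemma face_Hf_tight p : face (Hf f) gamma (-1) c p -> exists S, tight f gamma c S.
Proof.
move=> /face_Hf_support[n [w [q [w_sum _ q_tight]]]].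
have [i w_i] : exists i, w i != 0.
  apply/existsP; apply: contraTT (oner_neq0 R) => /existsPn w0.
  by rewrite -w_sum big1 ?eqxx // => i _; apply/eqP/negPn/w0.
by have [S _ ?] := q_tight i w_i; exists S.
Qed.

Lemma face_Hf_coord t p : (forall S, tight f gamma c S -> t \in S) ->
  face (Hf f) gamma (-1) c p -> p.1 t = 1.
Proof.
move=> tight_t /face_Hf_support[n [w [q [w_sum p_x q_tight]]]].
rewrite p_x -w_sum; apply: eq_bigr => i _.
have [->|w_i] := eqVneq (w i) 0; first by rewrite mul0r.
by have [S -> /tight_t tS] := q_tight i w_i; rewrite /charvec tS mulr1.
Qed.

Hypothesis f0 : f set0 = 0.

Lemma face_Hf_codim2 t k : (forall S, tight f gamma c S -> t \in S) ->
  (exists q : 'I_k -> pt R Omega,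
     (forall i, face (Hf f) gamma (-1) c (q i)) /\ aff_indep q) ->
  exists q : 'I_k.+2 -> pt R Omega, (forall i, Hf f (q i)) /\ aff_indep q.
Proof.
move=> tight_t [q [q_face q_indep]].
have x_t i : (q i).1 t = 1 by apply: face_Hf_coord tight_t (q_face i).
(* (0, 0) leaves the hyperplane x_t = 1 containing the face, and (0, 1) leaves
   the hyperplane gamma.x - z - c x_t = 0 containing both. *)
exists (ord_cons (charvec R set0, 1) (ord_cons (charvec R set0, 0) q)); split.
  move=> i; case: (unliftP ord0 i) => [j ->|->]; rewrite ?ord_consS ?ord_cons0.
    case: (unliftP ord0 j) => [l ->|->]; rewrite ?ord_consS ?ord_cons0.
      exact: (q_face l).1.
    by apply: charvec_in_Hf; rewrite f0.
  by apply: charvec_in_Hf; rewrite f0 ler01.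
apply: (aff_indep_cons (a := fun s => gamma s - c * unitvec R t s) (b := -1)
                       (e := 0)).
- apply: (aff_indep_cons (a := unitvec R t) (b := 0) (e := 1)) => // [i|].
    by rewrite lform_unitvec x_t.
  by rewrite lform_unitvec /= /charvec in_set0 eq_sym oner_neq0.
- move=> i; case: (unliftP ord0 i) => [j ->|->];
    rewrite ?ord_consS ?ord_cons0 lform_sub_coord.
    by rewrite (q_face j).2 x_t mulr1 subrr.
  by rewrite lform_charvec big_set0 /= /charvec in_set0; lra.
rewrite lform_sub_coord lform_charvec big_set0 /= /charvec in_set0.
by rewrite mulr0 subr0 add0r mulr1 oppr_eq0 oner_neq0.
Qed.

End FaceOfHf.

Theorem mainTheorem10 (R : realFieldType) (Omega : finType)
  (f : {set Omega} -> R) (gamma : Omega -> R) (gamma0 : R) :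
  increasing f ->
  f set0 = 0 ->
  (* sum_s gamma_s x_s <= z + |Omega| D[f] + gamma0, i.e. gamma.x - z <= c *)
  defines_facet (Hf f) gamma (-1) (#|Omega|%:R * Dmax f + gamma0) ->
  nontrivial_facet (Hf f) gamma (-1) (#|Omega|%:R * Dmax f + gamma0) ->
  inGamma (fun S : {set Omega} =>
             if S == set0 then 0 else f S + #|Omega|%:R * Dmax f + gamma0)
          gamma ->
  gamma0 <= 0.
Proof.
move=> _ f0 [Hf_le [d [dimH dimF]]] _.
set c := #|Omega|%:R * Dmax f + gamma0 in Hf_le dimH dimF.
set h := (fun S => _) => -[pi [pi_bij gamma_pi]].
have h_shift S : S != set0 -> h S = f S + c.
  by rewrite /h /c => /negbTE ->; rewrite addrA.
rewrite leNgt; apply/negP => gamma0_gt0.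
have [n0|n_gt0] := posnP #|Omega|.
  have [q [q_face _]] := dimF.1.
  have [S] := face_Hf_tight Hf_le (q_face ord0).
  have -> : S = set0 by apply/eqP; rewrite -cards_eq0 -leqn0 -n0 max_card.
  by rewrite /tight big_set0 f0 /c n0 mul0r; lra.
have c_gt : #|Omega|%:R * Dmax f < c by rewrite /c ltrDl.
have tight_pi0 :=
  tight_mem_pi0 pi_bij f0 h_shift gamma_pi (i0 := Ordinal n_gt0) erefl c_gt.
exact: (proj2 dimH) (face_Hf_codim2 Hf_le f0 tight_pi0 (proj1 dimF)).
Qed.
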